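(* Let $D$ be a dissection of the unit square $[0,1]^2$ into $n$ triangles. Then there exists a dissection $D'$ of the unit square into $n+2$ triangles with $\mathcal{R}(D')=\frac{n}{n+2}\mathcal{R}(D)$ and $\mathrm{RMS}(D')=\bigl(\frac{n}{n+2}\bigr)^{3/2}\mathrm{RMS}(D)$.
   Context: A dissection of a polygon $P$ of area $E$ is a finite set of triangles with disjoint interiors whose union is $P$. If its triangles have areas $a_1,\dots,a_n$, the range is $\mathcal{R}(D)=\max_{i,j}|a_i-a_j|$ and $\mathrm{RMS}(D)=\sqrt{\frac1n\sum_{i=1}^n(a_i-E/n)^2}$. *)

From Stdlib Require Import Reals List.
Open Scope R_scope.

Definition point : Type := (R * R)%type.
Definition tri : Type := (point * point * point)%type.

Definition tri_area (T : tri) : R :=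
  let '(A, B, C) := T in
  let '(ax, ay) := A in let '(bx, by_) := B in let '(cx, cy) := C in
  Rabs ((bx - ax) * (cy - ay) - (cx - ax) * (by_ - ay)) / 2.

Definition in_closed_tri (T : tri) (p : point) : Prop :=
  let '(A, B, C) := T in
  exists a b c : R, 0 <= a /\ 0 <= b /\ 0 <= c /\ a + b + c = 1 /\
    fst p = a * fst A + b * fst B + c * fst C /\
    snd p = a * snd A + b * snd B + c * snd C.

Definition in_open_tri (T : tri) (p : point) : Prop :=
  let '(A, B, C) := T in
  exists a b c : R, 0 < a /\ 0 < b /\ 0 < c /\ a + b + c = 1 /\
    fst p = a * fst A + b * fst B + c * fst C /\
    snd p = a * snd A + b * snd B + c * snd C.

Definition in_unit_square (p : point) : Prop :=
  0 <= fst p <= 1 /\ 0 <= snd p <= 1.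

Definition is_dissection (P : point -> Prop) (D : list tri) : Prop :=
  (forall T, In T D -> 0 < tri_area T) /\
  (forall i j : nat, (i < length D)%nat -> (j < length D)%nat -> i <> j ->
     forall p, ~ (in_open_tri (nth i D ((0,0),(0,0),(0,0))) p /\
                  in_open_tri (nth j D ((0,0),(0,0),(0,0))) p)) /\
  (forall p, P p <-> exists T, In T D /\ in_closed_tri T p).

Definition areas (D : list tri) : list R := map tri_area D.

Definition range (D : list tri) : R :=
  let l := areas D in
  fold_right Rmax 0 (map (fun a => fold_right Rmax 0 (map (fun b => Rabs (a - b)) l)) l).

Definition sumR (l : list R) : R := fold_right Rplus 0 l.

(* RMS with respect to the total area E of the dissected polygon. *)
Definition rms (E : R) (D : list tri) : R :=
  let n := INR (length D) in
  sqrt (/ n * sumR (map (fun a => (a - E / n) ^ 2) (areas D))).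

(* Squeeze the dissection horizontally into [0, c] x [0, 1], c = n / (n + 2), and cut the
   remaining strip [c, 1] x [0, 1] along a diagonal into two triangles of area
   (1 - c) / 2 = c / n.  Every old area is multiplied by c and the two new ones are c times the
   old mean 1 / n, so all deviations from the mean scale by c: the range by c (the mean lies
   between the smallest and the largest area) and the RMS by c * sqrt (n / (n + 2)) = c^(3/2).

   That the old mean is 1 / n, i.e. that the areas of a dissection of the square add up to 1,
   comes from integrating along vertical lines x = t: on each line the open slices of the
   triangles are disjoint open segments of [0, 1] and the closed slices cover [0, 1], while the
   slice length of a triangle is a tent function of t whose integral is the area. *)

From Stdlib Require Import Reals List Lra Lia Psatz Classical IndefiniteDescription Wf_nat.
From Coquelicot Require Import Coquelicot.
Import ListNotations.
Open Scope R_scope.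

Lemma is_RInt_ramp_up (c a b : R) :
  is_RInt (fun t => c * (t - a)) a b (c * (b - a) ^ 2 / 2).
Proof.
  replace (c * (b - a) ^ 2 / 2) with
    (minus ((fun t => c * (t - a) ^ 2 / 2) b) ((fun t => c * (t - a) ^ 2 / 2) a))
    by (unfold minus, plus, opp; simpl; field).
  apply (is_RInt_derive (fun t => c * (t - a) ^ 2 / 2)).
  - intros x _. auto_derive; [easy | simpl; field].
  - intros x _. apply (ex_derive_continuous (V := R_CompleteNormedModule)). auto_derive. easy.
Qed.

Lemma is_RInt_ramp_down (c a b : R) :
  is_RInt (fun t => c * (b - t)) a b (c * (b - a) ^ 2 / 2).
Proof.
  replace (c * (b - a) ^ 2 / 2) with
    (minus ((fun t => - (c * (b - t) ^ 2 / 2)) b) ((fun t => - (c * (b - t) ^ 2 / 2)) a))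
    by (unfold minus, plus, opp; simpl; field).
  apply (is_RInt_derive (fun t => - (c * (b - t) ^ 2 / 2))).
  - intros x _. auto_derive; [easy | simpl; field].
  - intros x _. apply (ex_derive_continuous (V := R_CompleteNormedModule)). auto_derive. easy.
Qed.

Lemma is_RInt_ext_open (f g : R -> R) (a b If : R) : a <= b ->
  (forall t, a < t < b -> f t = g t) -> is_RInt g a b If -> is_RInt f a b If.
Proof.
  intros Hab Hfg. apply is_RInt_ext. intros t.
  rewrite Rmin_left, Rmax_right by lra. intros Ht. symmetry. now apply Hfg.
Qed.

Lemma is_RInt_const_R (k a b : R) : is_RInt (fun _ => k) a b ((b - a) * k).
Proof. exact (is_RInt_const (V := R_NormedModule) a b k). Qed.

Lemma is_RInt_null (h : R -> R) (a b : R) :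
  a <= b -> (forall t, a < t < b -> h t = 0) -> is_RInt h a b 0.
Proof.
  intros Hab H. apply (is_RInt_ext_open h (fun _ => 0)); [easy | easy |].
  assert (K := is_RInt_const_R 0 a b). now rewrite Rmult_0_r in K.
Qed.

Lemma is_RInt_tent (h : R -> R) (x0 x1 x2 k : R) :
  0 <= x0 -> x0 <= x1 -> x1 <= x2 -> x2 <= 1 ->
  (forall t, 0 < t < x0 -> h t = 0) ->
  (forall t, x0 < t < x1 -> h t = k / (x1 - x0) * (t - x0)) ->
  (forall t, x1 < t < x2 -> h t = k / (x2 - x1) * (x2 - t)) ->
  (forall t, x2 < t < 1 -> h t = 0) ->
  is_RInt h 0 1 (k * (x2 - x0) / 2).
Proof.
  intros h0 h1 h2 h3 H0 H1 H2 H3.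
  assert (I1 : is_RInt h x0 x1 (k * (x1 - x0) / 2)).
  { destruct (Req_dec x0 x1) as [<- | E].
    - replace (k * (x0 - x0) / 2) with (@zero R_NormedModule)
        by (unfold zero; simpl; field).
      apply is_RInt_point.
    - apply (is_RInt_ext_open _ _ _ _ _ h1 H1).
      replace (k * (x1 - x0) / 2) with (k / (x1 - x0) * (x1 - x0) ^ 2 / 2) by (field; lra).
      apply is_RInt_ramp_up. }
  assert (I2 : is_RInt h x1 x2 (k * (x2 - x1) / 2)).
  { destruct (Req_dec x1 x2) as [<- | E].
    - replace (k * (x1 - x1) / 2) with (@zero R_NormedModule)
        by (unfold zero; simpl; field).
      apply is_RInt_point.
    - apply (is_RInt_ext_open _ _ _ _ _ h2 H2).
      replace (k * (x2 - x1) / 2) with (k / (x2 - x1) * (x2 - x1) ^ 2 / 2) by (field; lra).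
      apply is_RInt_ramp_down. }
  assert (J := is_RInt_Chasles h _ _ _ _ _
    (is_RInt_Chasles h _ _ _ _ _ (is_RInt_Chasles h _ _ _ _ _ (is_RInt_null h 0 x0 h0 H0) I1) I2)
    (is_RInt_null h x2 1 h3 H3)).
  replace (k * (x2 - x0) / 2) with (plus (plus (plus 0 (k * (x1 - x0) / 2)) (k * (x2 - x1) / 2)) 0)
    by (unfold plus; simpl; field).
  exact J.
Qed.

Definition in_segment (s : R * R) (y : R) : Prop := fst s <= y <= fst s + snd s.
Definition in_open_segment (s : R * R) (y : R) : Prop := fst s < y < fst s + snd s.
Definition open_disjoint (s s' : R * R) : Prop :=
  forall y, ~ (in_open_segment s y /\ in_open_segment s' y).

Lemma sumR_app (l1 l2 : list R) : sumR (l1 ++ l2) = sumR l1 + sumR l2.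
Proof. induction l1 as [|x l1 IH]; simpl; [ring | rewrite IH; ring]. Qed.

Lemma sumR_nonneg (l : list R) : (forall x, In x l -> 0 <= x) -> 0 <= sumR l.
Proof.
  induction l as [|x l IH]; simpl; intros H; [lra |].
  assert (0 <= x) by auto. assert (0 <= sumR l) by auto. lra.
Qed.

Lemma sumR_map_filter {A} (f : A -> R) (p : A -> bool) (L : list A) :
  sumR (map f L) =
  sumR (map f (filter p L)) + sumR (map f (filter (fun x => negb (p x)) L)).
Proof. induction L as [|x L IH]; simpl; [ring |]. destruct (p x); simpl; rewrite IH; ring. Qed.

Lemma ForallOrdPairs_filter {A} (R : A -> A -> Prop) (p : A -> bool) (L : list A) :
  ForallOrdPairs R L -> ForallOrdPairs R (filter p L).
Proof.
  induction 1 as [|a l Ha Hl IH]; simpl; [constructor |]. destruct (p a); [|easy].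
  constructor; [|easy]. rewrite Forall_forall in *. intros x Hx.
  apply filter_In in Hx. apply Ha, Hx.
Qed.

Lemma segments_cover_length (L : list (R * R)) (u v : R) : u <= v ->
  (forall s, In s L -> 0 <= snd s) ->
  (forall y, u <= y <= v -> exists s, In s L /\ in_segment s y) ->
  v - u <= sumR (map snd L).
Proof.
  revert u v.
  induction L as [L IH] using (well_founded_ind (well_founded_ltof _ (@length (R * R)))).
  intros u v Huv Hnn Hcov.
  destruct (Hcov u) as ([a l] & Hin & Hu); [lra |]. unfold in_segment in Hu; simpl in Hu.
  destruct (in_split _ _ Hin) as (L1 & L2 & ->).
  set (L' := L1 ++ L2).
  assert (HL' : forall s, In s L' -> In s (L1 ++ (a, l) :: L2)).
  { intros s Hs. apply in_app_or in Hs. apply in_or_app. simpl. tauto. }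
  assert (Hsum : sumR (map snd (L1 ++ (a, l) :: L2)) = l + sumR (map snd L')).
  { unfold L'. rewrite !map_app, !sumR_app. simpl. ring. }
  rewrite Hsum.
  assert (Hs0 : 0 <= sumR (map snd L')).
  { apply sumR_nonneg. intros x Hx. apply in_map_iff in Hx.
    destruct Hx as (s & <- & Hs). apply Hnn, HL', Hs. }
  (* Past [a + l] the segment [(a, l)] is useless: [L'] covers each [[w, v]] with [w > a + l]. *)
  assert (Hrest : forall w, a + l < w <= v -> v - w <= sumR (map snd L')).
  { intros w Hw. apply IH; [| lra | intros s Hs; apply Hnn, HL', Hs |].
    - unfold ltof, L'. rewrite !length_app. simpl. lia.
    - intros y Hy. destruct (Hcov y) as (s & Hs & Hys); [lra |].
      apply in_app_or in Hs. destruct Hs as [Hs | [<- | Hs]].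
      + exists s. split; [apply in_or_app |]; auto.
      + unfold in_segment in Hys; simpl in Hys. lra.
      + exists s. split; [apply in_or_app |]; auto. }
  destruct (Rle_dec (v - (a + l)) (sumR (map snd L'))) as [H | H]; [lra |].
  specialize (Hrest ((a + l + v - sumR (map snd L')) / 2) ltac:(lra)). lra.
Qed.

Lemma open_disjoint_apart (s s' : R * R) : 0 < snd s -> 0 < snd s' -> open_disjoint s s' ->
  fst s' + snd s' <= fst s \/ fst s + snd s <= fst s'.
Proof.
  destruct s as [a l], s' as [c m]; unfold open_disjoint, in_open_segment; simpl.
  intros Hl Hm H.
  destruct (Rle_dec (c + m) a); [now left |]. destruct (Rle_dec (a + l) c); [now right |].
  exfalso. apply (H ((Rmax a c + Rmin (a + l) (c + m)) / 2)).
  unfold Rmax, Rmin. repeat destruct (Rle_dec _ _); lra.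
Qed.

Lemma segments_packing_length (L : list (R * R)) (u v : R) : u <= v ->
  (forall s, In s L -> 0 <= snd s) ->
  (forall s, In s L -> forall y, in_open_segment s y -> u <= y <= v) ->
  ForallOrdPairs open_disjoint L ->
  sumR (map snd L) <= v - u.
Proof.
  revert u v.
  induction L as [L IH] using (well_founded_ind (well_founded_ltof _ (@length (R * R)))).
  intros u v Huv Hnn Hin Hd.
  destruct L as [|[a l] L]; simpl; [lra |].
  inversion Hd as [|? ? Hhead Htail]; subst.
  assert (Hl : 0 <= l) by (apply (Hnn (a, l)); now left).
  assert (Hnn' : forall s, In s L -> 0 <= snd s) by (intros; apply Hnn; now right).
  assert (Hin' : forall s, In s L -> forall y, in_open_segment s y -> u <= y <= v)
    by (intros; eapply Hin; [right |]; eauto).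
  assert (Hsub : forall p, (length (filter p L) < length ((a, l) :: L))%nat).
  { intros p. assert (Hf := filter_length_le p L). simpl. lia. }
  destruct (Req_dec l 0) as [-> | Hl0].
  { assert (IHL := IH L ltac:(unfold ltof; simpl; lia) u v Huv Hnn' Hin' Htail). lra. }
  assert (Hmid : forall y, a < y < a + l -> u <= y <= v)
    by (intros y Hy; apply (Hin (a, l) (or_introl eq_refl)); exact Hy).
  assert (Ha : u <= a) by (destruct (Rle_dec u a); [easy |];
    specialize (Hmid ((a + Rmin (a + l) u) / 2)); unfold Rmin in Hmid;
    destruct (Rle_dec _ _) in Hmid; lra).
  assert (Hb : a + l <= v) by (destruct (Rle_dec (a + l) v); [easy |];
    specialize (Hmid ((a + l + Rmax a v) / 2)); unfold Rmax in Hmid;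
    destruct (Rle_dec _ _) in Hmid; lra).
  (* Every other segment lies entirely to the left of [a] or to the right of [a + l]. *)
  set (left_of := fun s : R * R => if Rle_dec (fst s + snd s) a then true else false).
  rewrite (sumR_map_filter snd left_of).
  assert (Sl : sumR (map snd (filter left_of L)) <= a - u).
  { apply IH; [apply Hsub | exact Ha | | | now apply ForallOrdPairs_filter].
    - intros s Hs. apply filter_In in Hs. apply Hnn', Hs.
    - intros s Hs y Hy. apply filter_In in Hs. destruct Hs as [Hs Hf].
      unfold left_of in Hf. destruct (Rle_dec _ _) in Hf; [| discriminate].
      specialize (Hin' s Hs y Hy). unfold in_open_segment in Hy. lra. }
  assert (Sr : sumR (map snd (filter (fun s => negb (left_of s)) L)) <= v - (a + l)).
  { apply IH; [apply Hsub | exact Hb | | | now apply ForallOrdPairs_filter].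
    - intros s Hs. apply filter_In in Hs. apply Hnn', Hs.
    - intros s Hs y Hy. apply filter_In in Hs. destruct Hs as [Hs Hf].
      unfold left_of in Hf. destruct (Rle_dec _ _) in Hf; [discriminate |].
      specialize (Hin' s Hs y Hy). unfold in_open_segment in Hy.
      rewrite Forall_forall in Hhead.
      assert (0 <= snd s) by auto.
      destruct (open_disjoint_apart (a, l) s) as [Z | Z]; simpl in *; auto; lra. }
  lra.
Qed.

Definition chord (x0 y0 x2 y2 t : R) : R := y0 + (t - x0) * ((y2 - y0) / (x2 - x0)).

(* Written so that degenerate sides ([x0 = x1] or [x1 = x2]) never divide by zero where it matters. *)
Definition tent (x0 x1 x2 t : R) : R :=
  if Rlt_dec t x1 then (t - x0) / (x1 - x0)
  else if Rlt_dec x1 t then (x2 - t) / (x2 - x1) else 1.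

Definition vertical_segment (g d phi : R) : R * R := (g + Rmin 0 (d * phi), Rabs d * phi).

Lemma vertical_segment_mem (g d phi b : R) :
  0 <= b <= phi -> in_segment (vertical_segment g d phi) (g + b * d).
Proof.
  intros Hb. unfold in_segment, vertical_segment; simpl.
  destruct (Rle_dec 0 d).
  - rewrite Rmin_left, Rabs_pos_eq by nra. nra.
  - rewrite Rmin_right, Rabs_left by nra. nra.
Qed.

Lemma vertical_segment_open (g d phi y : R) : d <> 0 ->
  in_open_segment (vertical_segment g d phi) y -> exists b, 0 < b < phi /\ y = g + b * d.
Proof.
  intros Hd Hy. set (b := (y - g) / d).
  assert (Hyb : y = g + b * d) by (unfold b; field; exact Hd).
  exists b. split; [| exact Hyb].
  unfold in_open_segment, vertical_segment in Hy; simpl in Hy. rewrite Hyb in Hy.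
  destruct (Rle_dec 0 d).
  - rewrite Rabs_pos_eq in Hy by lra. unfold Rmin in Hy.
    destruct (Rle_dec 0 (d * phi)); split; nra.
  - rewrite Rabs_left in Hy by lra. unfold Rmin in Hy.
    destruct (Rle_dec 0 (d * phi)); split; nra.
Qed.

Definition vertical_slices (T : tri) (cl op : R -> R * R) : Prop :=
  is_RInt (fun t => snd (cl t)) 0 1 (tri_area T) /\
  is_RInt (fun t => snd (op t)) 0 1 (tri_area T) /\
  forall t, 0 <= snd (cl t) /\ 0 <= snd (op t) /\
    (forall y, in_closed_tri T (t, y) -> in_segment (cl t) y) /\
    (forall y, in_open_segment (op t) y -> in_open_tri T (t, y)).

Ltac decide_ifs := repeat (first [destruct (Rle_dec _ _) | destruct (Rlt_dec _ _)]; try lra).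

Section SortedTriangle.

Variables x0 y0 x1 y1 x2 y2 : R.
Hypotheses (H01 : x0 <= x1) (H12 : x1 <= x2) (H02 : x0 < x2).

Local Notation T := (((x0, y0), (x1, y1)), (x2, y2)).
Local Notation g := (chord x0 y0 x2 y2).
Local Notation d := (y1 - chord x0 y0 x2 y2 x1).
Local Notation phi := (tent x0 x1 x2).

(* [d] is the vertical offset of the middle vertex from the opposite side. *)
Lemma tri_area_sorted : tri_area T = Rabs d * (x2 - x0) / 2.
Proof.
  unfold tri_area, chord.
  replace ((x1 - x0) * (y2 - y0) - (x2 - x0) * (y1 - y0)) with
    (- ((y1 - (y0 + (x1 - x0) * ((y2 - y0) / (x2 - x0)))) * (x2 - x0))) by (field; lra).
  now rewrite Rabs_Ropp, Rabs_mult, (Rabs_pos_eq (x2 - x0)) by lra.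
Qed.

Lemma tent_nonneg (t : R) : x0 <= t <= x2 -> 0 <= phi t.
Proof.
  intros Ht. unfold tent. destruct (Rlt_dec t x1); [| destruct (Rlt_dec x1 t)]; try lra;
    apply Rle_div_r; lra.
Qed.

Lemma in_closed_tri_sorted (t y : R) : in_closed_tri T (t, y) ->
  x0 <= t <= x2 /\ exists b, 0 <= b <= phi t /\ y = g t + b * d.
Proof.
  intros (a & b & c & Ha & Hb & Hc & Hs & Ht & Hy); simpl in Ht, Hy.
  assert (E1 : t - x0 = b * (x1 - x0) + c * (x2 - x0)) by (rewrite Ht; nra).
  assert (E2 : x2 - t = a * (x2 - x0) + b * (x2 - x1)) by (rewrite Ht; nra).
  split; [nra |]. exists b. split; [split; [easy |] |].
  - unfold tent. destruct (Rlt_dec t x1); [| destruct (Rlt_dec x1 t)]; try nra;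
      apply Rle_div_r; nra.
  (* [g] is affine with [g x0 = y0] and [g x2 = y2], so only the weight [b] moves [y] off [g t]. *)
  - rewrite Ht, Hy. unfold chord. replace a with (1 - b - c) by lra. field. lra.
Qed.

Lemma in_open_tri_sorted (t b : R) : x0 < t < x2 -> 0 < b < phi t ->
  in_open_tri T (t, g t + b * d).
Proof.
  intros Ht Hb.
  set (c := (t - x0 - b * (x1 - x0)) / (x2 - x0)).
  assert (Ec : c * (x2 - x0) = t - x0 - b * (x1 - x0)) by (unfold c; field; lra).
  assert (Ea : (1 - b - c) * (x2 - x0) = x2 - t - b * (x2 - x1)) by nra.
  (* Below the apex [b < (t - x0) / (x1 - x0)] gives [c > 0]; above it gives [a > 0]. *)
  assert (Hac : 0 < c * (x2 - x0) /\ 0 < (1 - b - c) * (x2 - x0)).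
  { rewrite Ec, Ea. unfold tent in Hb.
    destruct (Rlt_dec t x1); [| destruct (Rlt_dec x1 t)].
    - destruct Hb as [Hb0 Hb]. apply Rlt_div_r in Hb; nra.
    - destruct Hb as [Hb0 Hb]. apply Rlt_div_r in Hb; nra.
    - nra. }
  exists (1 - b - c), b, c.
  split; [nra | split; [lra | split; [nra | split; [ring |]]]]. simpl.
  split; [unfold c; field; lra |]. unfold c, chord. field. lra.
Qed.

Lemma vertical_slices_sorted : 0 <= x0 -> x2 <= 1 -> 0 < tri_area T ->
  exists cl op, vertical_slices T cl op.
Proof.
  intros Hx0 Hx2 Hpos. rewrite tri_area_sorted in Hpos.
  assert (Hd : d <> 0) by (intros E; rewrite E, Rabs_R0 in Hpos; lra).
  exists (fun t => vertical_segment (g t) d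
    (if Rle_dec x0 t then if Rle_dec t x2 then phi t else 0 else 0)).
  exists (fun t => vertical_segment (g t) d
    (if Rlt_dec x0 t then if Rlt_dec t x2 then phi t else 0 else 0)).
  unfold vertical_slices. rewrite tri_area_sorted. simpl.
  split; [| split]; [apply (is_RInt_tent _ x0 x1 x2) .. |]; try lra;
    try (intros t Ht; unfold tent; decide_ifs; unfold Rdiv; ring).
  intros t. split; [| split; [| split]].
  - decide_ifs; apply Rmult_le_pos; try apply Rabs_pos; try apply tent_nonneg; lra.
  - decide_ifs; apply Rmult_le_pos; try apply Rabs_pos; try apply tent_nonneg; lra.
  - intros y Hy. destruct (in_closed_tri_sorted t y Hy) as (Ht & b & Hb & ->).
    decide_ifs. now apply vertical_segment_mem.
  - intros y Hy. destruct (vertical_segment_open _ _ _ _ Hd Hy) as (b & Hb & ->).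
    decide_ifs. now apply in_open_tri_sorted.
Qed.

End SortedTriangle.

Definition same_tri (T T' : tri) : Prop :=
  tri_area T = tri_area T' /\ (forall p, in_closed_tri T p <-> in_closed_tri T' p) /\
  (forall p, in_open_tri T p <-> in_open_tri T' p).

Lemma same_tri_swap12 (A B C : point) : same_tri ((A, B), C) ((B, A), C).
Proof.
  destruct A as [xa ya], B as [xb yb], C as [xc yc]. split; [| split].
  - unfold tri_area. f_equal. rewrite <- Rabs_Ropp. f_equal. ring.
  - intros p; simpl; split; intros (a & b & c & H); exists b, a, c; lra.
  - intros p; simpl; split; intros (a & b & c & H); exists b, a, c; lra.
Qed.

Lemma same_tri_swap23 (A B C : point) : same_tri ((A, B), C) ((A, C), B).
Proof.
  destruct A as [xa ya], B as [xb yb], C as [xc yc]. split; [| split].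
  - unfold tri_area. f_equal. rewrite <- Rabs_Ropp. f_equal. ring.
  - intros p; simpl; split; intros (a & b & c & H); exists a, c, b; lra.
  - intros p; simpl; split; intros (a & b & c & H); exists a, c, b; lra.
Qed.

Definition sliceable (T : tri) : Prop :=
  0 < tri_area T -> exists cl op, vertical_slices T cl op.

Lemma sliceable_same_tri (T T' : tri) : same_tri T T' -> sliceable T' -> sliceable T.
Proof.
  intros (Ha & Hc & Ho) HT' Hpos. rewrite Ha in Hpos.
  destruct (HT' Hpos) as (cl & op & I1 & I2 & H). exists cl, op.
  unfold vertical_slices. rewrite Ha. split; [exact I1 | split; [exact I2 |]].
  intros t. destruct (H t) as (H1 & H2 & H3 & H4).
  split; [exact H1 | split; [exact H2 | split]].
  - intros y Hy. apply H3, Hc, Hy.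
  - intros y Hy. apply Ho, H4, Hy.
Qed.

Lemma sliceable_sorted (x0 y0 x1 y1 x2 y2 : R) : 0 <= x0 -> x0 <= x1 -> x1 <= x2 -> x2 <= 1 ->
  sliceable (((x0, y0), (x1, y1)), (x2, y2)).
Proof.
  intros Hx0 H01 H12 Hx2 Hpos.
  destruct (Req_dec x0 x2) as [E | E].
  - exfalso. subst x2. replace x1 with x0 in Hpos by lra. unfold tri_area in Hpos.
    replace ((x0 - x0) * (y2 - y0) - (x0 - x0) * (y1 - y0)) with 0 in Hpos by ring.
    rewrite Rabs_R0 in Hpos. lra.
  - apply vertical_slices_sorted; lra.
Qed.

Lemma sliceable_in_strip (A B C : point) :
  0 <= fst A <= 1 -> 0 <= fst B <= 1 -> 0 <= fst C <= 1 -> sliceable ((A, B), C).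
Proof.
  assert (S12 : forall P Q S, sliceable ((Q, P), S) -> sliceable ((P, Q), S))
    by (intros P Q S; apply sliceable_same_tri, same_tri_swap12).
  assert (S23 : forall P Q S, sliceable ((P, S), Q) -> sliceable ((P, Q), S))
    by (intros P Q S; apply sliceable_same_tri, same_tri_swap23).
  destruct A as [xa ya], B as [xb yb], C as [xc yc]; simpl. intros HA HB HC.
  destruct (Rle_dec xa xb), (Rle_dec xb xc), (Rle_dec xa xc);
    first
    [ apply sliceable_sorted; lra
    | apply S12, sliceable_sorted; lra
    | apply S23, sliceable_sorted; lra
    | apply S12, S23, sliceable_sorted; lra
    | apply S23, S12, sliceable_sorted; lra
    | apply S12, S23, S12, sliceable_sorted; lra ].
Qed.

Definition disjoint_interiors (T T' : tri) : Prop :=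
  forall p, ~ (in_open_tri T p /\ in_open_tri T' p).

Lemma ForallOrdPairs_of_nth {A} (R : A -> A -> Prop) (d : A) (L : list A) :
  (forall i j, (i < length L)%nat -> (j < length L)%nat -> i <> j -> R (nth i L d) (nth j L d)) ->
  ForallOrdPairs R L.
Proof.
  induction L as [|a l IH]; intros H; constructor.
  - rewrite Forall_forall. intros x Hx. destruct (In_nth l x d Hx) as (k & Hk & <-).
    apply (H 0%nat (S k)); simpl; lia.
  - apply IH. intros i j Hi Hj Hij. apply (H (S i) (S j)); simpl; lia.
Qed.

Lemma ForallOrdPairs_map {A B} (R1 : A -> A -> Prop) (R2 : B -> B -> Prop) (f : A -> B)
  (L : list A) : (forall x y, In x L -> In y L -> R1 x y -> R2 (f x) (f y)) ->
  ForallOrdPairs R1 L -> ForallOrdPairs R2 (map f L).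
Proof.
  intros Hf H. induction H as [|a l Ha Hl IH]; simpl; constructor.
  - rewrite Forall_forall in *. intros z Hz. apply in_map_iff in Hz.
    destruct Hz as (x & <- & Hx). apply Hf; [now left | now right | apply Ha, Hx].
  - apply IH. intros x y Hx Hy. apply Hf; now right.
Qed.

Lemma is_RInt_sumR {A} (F : A -> R -> R) (I : A -> R) (L : list A) (a b : R) :
  (forall x, In x L -> is_RInt (F x) a b (I x)) ->
  is_RInt (fun t => sumR (map (fun x => F x t) L)) a b (sumR (map I L)).
Proof.
  induction L as [|x L IH]; intros H; simpl.
  - assert (K := is_RInt_const_R 0 a b). now rewrite Rmult_0_r in K.
  - apply (is_RInt_plus (V := R_NormedModule)); [apply H; now left |].
    apply IH. intros; apply H; now right.
Qed.

Lemma in_open_closed_tri (T : tri) (p : point) : in_open_tri T p -> in_closed_tri T p.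
Proof.
  destruct T as [[A B] C]; simpl. intros (a & b & c & H). exists a, b, c. lra.
Qed.

Lemma in_closed_tri_vertices (A B C : point) :
  in_closed_tri ((A, B), C) A /\ in_closed_tri ((A, B), C) B /\ in_closed_tri ((A, B), C) C.
Proof.
  split; [| split]; simpl; [exists 1, 0, 0 | exists 0, 1, 0 | exists 0, 0, 1]; lra.
Qed.

Lemma dissection_disjoint_interiors (P : point -> Prop) (D : list tri) :
  is_dissection P D -> ForallOrdPairs disjoint_interiors D.
Proof.
  intros (_ & Hdisj & _). apply (ForallOrdPairs_of_nth _ (((0, 0), (0, 0), (0, 0)) : tri)).
  intros i j Hi Hj Hij. exact (Hdisj i j Hi Hj Hij).
Qed.

Lemma dissection_slices (D : list tri) : is_dissection in_unit_square D ->
  exists cl op : tri -> R -> R * R, forall T, In T D -> vertical_slices T (cl T) (op T).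
Proof.
  intros (Hpos & _ & Hcov).
  destruct (functional_choice
    (fun T p => In T D -> vertical_slices T (fst p) (snd p))) as [f Hf].
  { intros [[A B] C]. destruct (classic (In ((A, B), C) D)) as [HT | HT].
    - assert (Hx : forall p, in_closed_tri ((A, B), C) p -> 0 <= fst p <= 1)
        by (intros p Hp; apply (Hcov p); now exists ((A, B), C)).
      destruct (in_closed_tri_vertices A B C) as (HA & HB & HC).
      destruct (sliceable_in_strip A B C) as (cl & op & H); auto.
      now exists (cl, op).
    - exists (fun _ => (0, 0), fun _ => (0, 0)). tauto. }
  now exists (fun T => fst (f T)), (fun T => snd (f T)).
Qed.

Section VerticalLine.

Variables (D : list tri) (cl op : tri -> R -> R * R).
Hypotheses (HD : is_dissection in_unit_square D)
  (Hsl : forall T, In T D -> vertical_slices T (cl T) (op T)).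

Lemma open_slices_length_sum (t : R) : 0 < t < 1 -> sumR (map (fun T => snd (op T t)) D) <= 1.
Proof.
  intros Ht. destruct HD as (_ & _ & Hcov).
  rewrite <- (map_map (fun T => op T t) snd). replace 1 with (1 - 0) by ring.
  apply segments_packing_length; [lra | | |].
  - intros s Hs. apply in_map_iff in Hs. destruct Hs as (T & <- & HT). apply (Hsl T HT).
  - intros s Hs y Hy. apply in_map_iff in Hs. destruct Hs as (T & <- & HT).
    apply (Hcov (t, y)). exists T. split; [exact HT |].
    apply in_open_closed_tri, (Hsl T HT), Hy.
  - apply (ForallOrdPairs_map disjoint_interiors); [| exact (dissection_disjoint_interiors _ _ HD)].
    intros T T' HT HT' Hd y [Hy Hy']. apply (Hd (t, y)).
    split; [apply (Hsl T HT), Hy | apply (Hsl T' HT'), Hy'].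
Qed.

Lemma closed_slices_length_sum (t : R) : 0 < t < 1 -> 1 <= sumR (map (fun T => snd (cl T t)) D).
Proof.
  intros Ht. destruct HD as (_ & _ & Hcov).
  rewrite <- (map_map (fun T => cl T t) snd). replace 1 with (1 - 0) by ring.
  apply segments_cover_length; [lra | |].
  - intros s Hs. apply in_map_iff in Hs. destruct Hs as (T & <- & HT). apply (Hsl T HT).
  - intros y Hy. destruct (proj1 (Hcov (t, y)) ltac:(split; simpl; lra)) as (T & HT & Hc).
    exists (cl T t). split; [now apply (in_map (fun T => cl T t)) |].
    apply (Hsl T HT), Hc.
Qed.

End VerticalLine.

Lemma dissection_area_sum (D : list tri) :
  is_dissection in_unit_square D -> sumR (areas D) = 1.
Proof.
  intros HD. destruct (dissection_slices D HD) as (cl & op & Hsl).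
  assert (IC : is_RInt (fun t => sumR (map (fun T => snd (cl T t)) D)) 0 1 (sumR (areas D)))
    by (apply is_RInt_sumR; intros T HT; apply (Hsl T HT)).
  assert (IO : is_RInt (fun t => sumR (map (fun T => snd (op T t)) D)) 0 1 (sumR (areas D)))
    by (apply is_RInt_sumR; intros T HT; apply (Hsl T HT)).
  assert (I1 : is_RInt (fun _ => 1) 0 1 1)
    by (replace 1 with ((1 - 0) * 1) at 2 by ring; apply is_RInt_const_R).
  apply Rle_antisym.
  - apply (is_RInt_le _ _ 0 1 _ _ ltac:(lra) IO I1). now apply (open_slices_length_sum D cl op).
  - apply (is_RInt_le _ _ 0 1 _ _ ltac:(lra) I1 IC). now apply (closed_slices_length_sum D cl op).
Qed.


Lemma ForallOrdPairs_nth {A} (R : A -> A -> Prop) (d : A) (L : list A) :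
  (forall x y, R x y -> R y x) -> ForallOrdPairs R L ->
  forall i j, (i < length L)%nat -> (j < length L)%nat -> i <> j -> R (nth i L d) (nth j L d).
Proof.
  intros Hsym H. induction H as [|a l Ha Hl IH]; intros i j Hi Hj Hij; simpl in *; [lia |].
  rewrite Forall_forall in Ha.
  destruct i as [|i], j as [|j]; [lia | | | apply IH; lia].
  - apply Ha, nth_In. lia.
  - apply Hsym, Ha, nth_In. lia.
Qed.

Lemma ForallOrdPairs_app {A} (R : A -> A -> Prop) (l1 l2 : list A) :
  ForallOrdPairs R l1 -> ForallOrdPairs R l2 -> (forall x y, In x l1 -> In y l2 -> R x y) ->
  ForallOrdPairs R (l1 ++ l2).
Proof.
  intros H1 H2 H12. induction H1 as [|a l Ha Hl IH]; simpl; [exact H2 |].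
  constructor.
  - rewrite Forall_forall in *. intros y Hy. apply in_app_or in Hy.
    destruct Hy as [Hy | Hy]; [now apply Ha | apply H12; [now left | exact Hy]].
  - apply IH. intros x y Hx Hy. apply H12; [now right | exact Hy].
Qed.

Definition hscale_point (c : R) (p : point) : point := (c * fst p, snd p).
Definition hscale_tri (c : R) (T : tri) : tri :=
  let '(A, B, C) := T in (hscale_point c A, hscale_point c B, hscale_point c C).

Lemma tri_area_hscale (c : R) (T : tri) : 0 <= c -> tri_area (hscale_tri c T) = c * tri_area T.
Proof.
  intros Hc. destruct T as [[[xa ya] [xb yb]] [xc yc]]. unfold hscale_tri, hscale_point, tri_area; simpl.
  replace ((c * xb - c * xa) * (yc - ya) - (c * xc - c * xa) * (yb - ya)) with
    (c * ((xb - xa) * (yc - ya) - (xc - xa) * (yb - ya))) by ring.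
  rewrite Rabs_mult, (Rabs_pos_eq c) by lra. field.
Qed.

Lemma in_closed_tri_hscale (c : R) (T : tri) (x y : R) : c <> 0 ->
  in_closed_tri (hscale_tri c T) (x, y) <-> in_closed_tri T (x / c, y).
Proof.
  intros Hc. destruct T as [[[xa ya] [xb yb]] [xc yc]]. unfold hscale_tri, hscale_point; simpl.
  split; intros (a & b & d & H1 & H2 & H3 & H4 & H5 & H6); exists a, b, d;
    repeat split; auto.
  - rewrite H5. field. exact Hc.
  - replace x with (x / c * c) by (field; exact Hc). rewrite H5. ring.
Qed.

Lemma in_open_tri_hscale (c : R) (T : tri) (x y : R) : c <> 0 ->
  in_open_tri (hscale_tri c T) (x, y) <-> in_open_tri T (x / c, y).
Proof.
  intros Hc. destruct T as [[[xa ya] [xb yb]] [xc yc]]. unfold hscale_tri, hscale_point; simpl.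
  split; intros (a & b & d & H1 & H2 & H3 & H4 & H5 & H6); exists a, b, d;
    repeat split; auto.
  - rewrite H5. field. exact Hc.
  - replace x with (x / c * c) by (field; exact Hc). rewrite H5. ring.
Qed.

Definition strip_lower (c : R) : tri := (((c, 0), (1, 0)), (1, 1)).
Definition strip_upper (c : R) : tri := (((c, 0), (1, 1)), (c, 1)).

Lemma tri_area_strip_lower (c : R) : c <= 1 -> tri_area (strip_lower c) = (1 - c) / 2.
Proof. intros. unfold tri_area, strip_lower. f_equal. rewrite Rabs_pos_eq; ring_simplify; lra. Qed.

Lemma tri_area_strip_upper (c : R) : c <= 1 -> tri_area (strip_upper c) = (1 - c) / 2.
Proof. intros. unfold tri_area, strip_upper. f_equal. rewrite Rabs_pos_eq; ring_simplify; lra. Qed.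

(* The diagonal from [(c, 0)] to [(1, 1)] separates the two strip triangles. *)
Lemma in_open_tri_strip_lower (c x y : R) : c < 1 -> in_open_tri (strip_lower c) (x, y) ->
  c < x /\ (x - c) - y * (1 - c) > 0.
Proof.
  intros Hc (a & b & d & H1 & H2 & H3 & H4 & H5 & H6); simpl in *.
  rewrite H5, H6. replace a with (1 - b - d) by lra. split; nra.
Qed.

Lemma in_open_tri_strip_upper (c x y : R) : c < 1 -> in_open_tri (strip_upper c) (x, y) ->
  c < x /\ (x - c) - y * (1 - c) < 0.
Proof.
  intros Hc (a & b & d & H1 & H2 & H3 & H4 & H5 & H6); simpl in *.
  rewrite H5, H6. replace a with (1 - b - d) by lra. split; nra.
Qed.

Definition strip_extend (c : R) (D : list tri) : list tri :=
  map (hscale_tri c) D ++ [strip_lower c; strip_upper c].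

Section StripExtend.

Variables (c : R) (D : list tri).
Hypotheses (Hc : 0 < c < 1) (HD : is_dissection in_unit_square D).

Lemma in_closed_tri_hscale_square (T : tri) (x y : R) : In T D ->
  in_closed_tri (hscale_tri c T) (x, y) -> (0 <= x <= c) /\ 0 <= y <= 1.
Proof.
  intros HT H. apply in_closed_tri_hscale in H; [| lra].
  destruct HD as (_ & _ & Hcov). destruct (proj2 (Hcov (x / c, y)) (ex_intro _ T (conj HT H)))
    as [[Hx0 Hx1] Hy]; simpl in *.
  replace x with (x / c * c) by (field; lra). split; [split |]; nra.
Qed.

Lemma strip_extend_disjoint : ForallOrdPairs disjoint_interiors (strip_extend c D).
Proof.
  apply ForallOrdPairs_app.
  - apply (ForallOrdPairs_map disjoint_interiors).
    + intros T T' _ _ H [x y] [Hx Hx']. apply in_open_tri_hscale in Hx, Hx'; try lra.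
      apply (H (x / c, y)). tauto.
    + exact (dissection_disjoint_interiors _ _ HD).
  - repeat constructor. intros [x y] [Hl Hu].
    apply in_open_tri_strip_lower in Hl; apply in_open_tri_strip_upper in Hu; lra.
  - intros T S HT HS [x y] [H1 H2]. apply in_map_iff in HT. destruct HT as (T0 & <- & HT0).
    apply in_open_closed_tri, (in_closed_tri_hscale_square T0) in H1; [| exact HT0].
    destruct HS as [<- | [<- | []]];
      [apply in_open_tri_strip_lower in H2 | apply in_open_tri_strip_upper in H2]; lra.
Qed.

Lemma strip_extend_covers (p : point) :
  in_unit_square p <-> exists T, In T (strip_extend c D) /\ in_closed_tri T p.
Proof.
  destruct p as [x y]. split.
  - intros [Hx Hy]; simpl in Hx, Hy. destruct HD as (_ & _ & Hcov).
    destruct (Rle_dec x c) as [Hxc | Hxc].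
    + destruct (proj1 (Hcov (x / c, y))) as (T & HT & HC).
      { split; simpl; [split |]; [apply Rle_div_r | apply Rle_div_l |]; lra. }
      exists (hscale_tri c T). split; [apply in_or_app; left; now apply in_map |].
      now apply in_closed_tri_hscale; [lra |].
    + set (u := (x - c) / (1 - c)).
      assert (Eu : u * (1 - c) = x - c) by (unfold u; field; lra).
      assert (Hu : 0 <= u <= 1) by nra.
      destruct (Rle_dec y u).
      * exists (strip_lower c). split; [apply in_or_app; right; now left |].
        exists (1 - u), (u - y), y. simpl. repeat split; nra.
      * exists (strip_upper c). split; [apply in_or_app; right; right; now left |].
        exists (1 - y), u, (y - u). simpl. repeat split; nra.
  - intros (T & HT & HC). apply in_app_or in HT. destruct HT as [HT | HT].
    + apply in_map_iff in HT. destruct HT as (T0 & <- & HT0).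
      destruct (in_closed_tri_hscale_square T0 x y HT0 HC).
      split; simpl; lra.
    + destruct HT as [<- | [<- | []]]; destruct HC as (a & b & d & H);
        split; simpl in *; nra.
Qed.

Lemma strip_extend_dissection : is_dissection in_unit_square (strip_extend c D).
Proof.
  destruct HD as (Hpos & _ & _). split; [| split; [| exact strip_extend_covers]].
  - intros T HT. apply in_app_or in HT. destruct HT as [HT | [<- | [<- | []]]].
    + apply in_map_iff in HT. destruct HT as (T0 & <- & HT0).
      rewrite tri_area_hscale by lra. apply Rmult_lt_0_compat; [lra | now apply Hpos].
    + rewrite tri_area_strip_lower; lra.
    + rewrite tri_area_strip_upper; lra.
  - intros i j Hi Hj Hij. apply (ForallOrdPairs_nth disjoint_interiors); try easy.
    + intros T T' H p Hp. apply (H p). tauto.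
    + exact strip_extend_disjoint.
Qed.

End StripExtend.

Definition list_range (l : list R) : R :=
  fold_right Rmax 0 (map (fun a => fold_right Rmax 0 (map (fun b => Rabs (a - b)) l)) l).

Lemma fold_Rmax_le (L : list R) (r : R) : 0 <= r -> (forall x, In x L -> x <= r) ->
  fold_right Rmax 0 L <= r.
Proof. induction L; simpl; intros; [easy |]. apply Rmax_lub; auto. Qed.

Lemma fold_Rmax_ge (L : list R) (x : R) : In x L -> x <= fold_right Rmax 0 L.
Proof.
  induction L as [|y L IH]; simpl; intros H; [easy |].
  destruct H as [<- | H]; [apply Rmax_l | eapply Rle_trans; [now apply IH | apply Rmax_r]].
Qed.

Lemma list_range_le (l : list R) (r : R) : 0 <= r ->
  (forall a b, In a l -> In b l -> Rabs (a - b) <= r) -> list_range l <= r.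
Proof.
  intros Hr H. apply fold_Rmax_le; [easy |]. intros x Hx. apply in_map_iff in Hx.
  destruct Hx as (a & <- & Ha). apply fold_Rmax_le; [easy |]. intros y Hy.
  apply in_map_iff in Hy. destruct Hy as (b & <- & Hb). auto.
Qed.

Lemma list_range_ge (l : list R) (a b : R) : In a l -> In b l -> Rabs (a - b) <= list_range l.
Proof.
  intros Ha Hb. eapply Rle_trans; [| apply fold_Rmax_ge, in_map, Ha].
  apply fold_Rmax_ge, (in_map (fun b => Rabs (a - b))), Hb.
Qed.

Lemma list_range_nonneg (l : list R) : 0 <= list_range l.
Proof.
  unfold list_range. induction (map _ l) as [|x L IH]; simpl; [lra |].
  eapply Rle_trans; [exact IH | apply Rmax_r].
Qed.

Lemma list_range_scale (c : R) (l : list R) : 0 < c ->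
  list_range (map (Rmult c) l) = c * list_range l.
Proof.
  intros Hc.
  assert (Habs : forall a b, Rabs (c * a - c * b) = c * Rabs (a - b)).
  { intros a b. rewrite <- Rmult_minus_distr_l, Rabs_mult, Rabs_pos_eq; lra. }
  apply Rle_antisym.
  - apply list_range_le; [apply Rmult_le_pos; [lra | apply list_range_nonneg] |].
    intros a' b' Ha Hb. apply in_map_iff in Ha, Hb.
    destruct Ha as (a & <- & Ha), Hb as (b & <- & Hb). rewrite Habs.
    apply Rmult_le_compat_l; [lra | now apply list_range_ge].
  - rewrite Rmult_comm. apply Rle_div_r; [lra |]. apply list_range_le.
    + apply Rdiv_le_0_compat; [apply list_range_nonneg | lra].
    + intros a b Ha Hb. apply Rle_div_r; [lra |]. rewrite Rmult_comm, <- Habs.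
      apply list_range_ge; now apply in_map.
Qed.

Lemma list_range_app_between (l m : list R) (lo hi : R) : In lo l -> In hi l ->
  (forall z, In z m -> lo <= z <= hi) -> list_range (l ++ m) = list_range l.
Proof.
  intros Hlo Hhi Hm.
  assert (Hn := list_range_nonneg l).
  assert (Hmid : forall z w, lo <= z <= hi -> In w l -> Rabs (z - w) <= list_range l).
  { intros z w Hz Hw. assert (A1 := list_range_ge l lo w Hlo Hw).
    assert (A2 := list_range_ge l hi w Hhi Hw).
    revert A1 A2. unfold Rabs. repeat destruct (Rcase_abs _); lra. }
  assert (Hspan : forall z w, lo <= z <= hi -> lo <= w <= hi -> Rabs (z - w) <= list_range l).
  { intros z w Hz Hw. assert (A := list_range_ge l hi lo Hhi Hlo).
    revert A. unfold Rabs. repeat destruct (Rcase_abs _); lra. }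
  apply Rle_antisym.
  - apply list_range_le; [easy |]. intros a b Ha Hb.
    apply in_app_or in Ha, Hb. destruct Ha as [Ha | Ha], Hb as [Hb | Hb].
    + now apply list_range_ge.
    + rewrite Rabs_minus_sym. apply Hmid; auto.
    + apply Hmid; auto.
    + apply Hspan; auto.
  - apply list_range_le; [apply list_range_nonneg |].
    intros a b Ha Hb. apply list_range_ge; apply in_or_app; now left.
Qed.

Lemma sumR_gt_const (l : list R) (k : R) : l <> [] -> (forall x, In x l -> k < x) ->
  INR (length l) * k < sumR l.
Proof.
  induction l as [|a [|b l] IH]; intros Hne H; [easy | simpl; specialize (H a (in_eq _ _)); lra |].
  rewrite length_cons, S_INR. simpl sumR.
  assert (k < a) by (apply H; now left).
  assert (INR (length (b :: l)) * k < sumR (b :: l))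
    by (apply IH; [easy | intros; apply H; now right]).
  simpl sumR in *. lra.
Qed.

Lemma sumR_lt_const (l : list R) (k : R) : l <> [] -> (forall x, In x l -> x < k) ->
  sumR l < INR (length l) * k.
Proof.
  induction l as [|a [|b l] IH]; intros Hne H; [easy | simpl; specialize (H a (in_eq _ _)); lra |].
  rewrite length_cons, S_INR. simpl sumR.
  assert (a < k) by (apply H; now left).
  assert (sumR (b :: l) < INR (length (b :: l)) * k)
    by (apply IH; [easy | intros; apply H; now right]).
  simpl sumR in *. lra.
Qed.

Lemma exists_le_mean (l : list R) : l <> [] ->
  exists x, In x l /\ x <= sumR l / INR (length l).
Proof.
  intros Hne. assert (Hn : 0 < INR (length l)) by (apply lt_0_INR; destruct l; [easy | simpl; lia]).
  apply NNPP. intros Hno.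
  assert (H := sumR_gt_const l (sumR l / INR (length l)) Hne).
  assert (sumR l < sumR l) by (replace (sumR l) with (INR (length l) * (sumR l / INR (length l))) at 1
    by (field; lra); apply H; intros x Hx; apply Rnot_le_lt; intros Hx'; apply Hno; eauto).
  lra.
Qed.

Lemma exists_ge_mean (l : list R) : l <> [] ->
  exists x, In x l /\ sumR l / INR (length l) <= x.
Proof.
  intros Hne. assert (Hn : 0 < INR (length l)) by (apply lt_0_INR; destruct l; [easy | simpl; lia]).
  apply NNPP. intros Hno.
  assert (H := sumR_lt_const l (sumR l / INR (length l)) Hne).
  assert (sumR l < sumR l) by (replace (sumR l) with (INR (length l) * (sumR l / INR (length l))) at 2
    by (field; lra); apply H; intros x Hx; apply Rnot_le_lt; intros Hx'; apply Hno; eauto).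
  lra.
Qed.

Lemma sumR_map_scale {A} (f : A -> R) (k : R) (l : list A) :
  sumR (map (fun a => k * f a) l) = k * sumR (map f l).
Proof. induction l as [|a l IH]; simpl; [ring | rewrite IH; ring]. Qed.

Lemma Rpower_3_2 (x : R) : 0 < x -> Rpower x (3 / 2) = sqrt (x ^ 3).
Proof.
  intros Hx. replace (3 / 2) with (INR 3 * / 2) by (simpl; field).
  rewrite <- Rpower_mult, Rpower_pow by lra. apply Rpower_sqrt, pow_lt, Hx.
Qed.

Lemma dissection_nonempty (D : list tri) : is_dissection in_unit_square D -> D <> [].
Proof.
  intros (_ & _ & Hcov) ->. destruct (proj1 (Hcov (0, 0))) as (T & [] & _).
  split; simpl; lra.
Qed.

Definition shrink_factor (n : nat) : R := INR n / INR (n + 2).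

Lemma shrink_factor_spec (n : nat) : (0 < n)%nat ->
  0 < shrink_factor n < 1 /\ (1 - shrink_factor n) / 2 = shrink_factor n * (1 / INR n).
Proof.
  intros Hn. apply lt_0_INR in Hn. unfold shrink_factor. rewrite plus_INR. simpl.
  split; [split; [apply Rdiv_lt_0_compat | apply Rlt_div_l] | field]; lra.
Qed.

Lemma length_strip_extend (c : R) (D : list tri) :
  length (strip_extend c D) = (length D + 2)%nat.
Proof. unfold strip_extend. rewrite length_app, length_map. reflexivity. Qed.

Lemma areas_strip_extend (c : R) (D : list tri) : 0 <= c <= 1 ->
  areas (strip_extend c D) = map (Rmult c) (areas D) ++ [(1 - c) / 2; (1 - c) / 2].
Proof.
  intros Hc. unfold areas, strip_extend. rewrite map_app, !map_map. f_equal.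
  - apply map_ext. intros T. apply tri_area_hscale. lra.
  - cbn [map]. rewrite tri_area_strip_lower, tri_area_strip_upper by lra. reflexivity.
Qed.

Lemma range_strip_extend (D : list tri) : is_dissection in_unit_square D ->
  range (strip_extend (shrink_factor (length D)) D) = shrink_factor (length D) * range D.
Proof.
  intros HD.
  assert (Hne := dissection_nonempty D HD).
  assert (Hareas : areas D <> []) by (unfold areas; now destruct D).
  destruct (shrink_factor_spec (length D)) as [Hc Hstrip]; [destruct D; [easy | simpl; lia] |].
  set (c := shrink_factor (length D)) in *.
  assert (Hmean : sumR (areas D) / INR (length (areas D)) = 1 / INR (length D))
    by (rewrite (dissection_area_sum D HD); unfold areas; now rewrite length_map).
  destruct (exists_le_mean _ Hareas) as (lo & Hlo & Hlo').
  destruct (exists_ge_mean _ Hareas) as (hi & Hhi & Hhi').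
  rewrite Hmean in Hlo', Hhi'.
  change (list_range (areas (strip_extend c D)) = c * list_range (areas D)).
  rewrite areas_strip_extend, Hstrip by lra.
  rewrite (list_range_app_between _ _ (c * lo) (c * hi)); try now apply in_map.
  - now apply list_range_scale.
  - intros z [<- | [<- | []]]; split; apply Rmult_le_compat_l; lra.
Qed.

Lemma rms_strip_extend (D : list tri) : is_dissection in_unit_square D ->
  rms 1 (strip_extend (shrink_factor (length D)) D) =
  Rpower (shrink_factor (length D)) (3 / 2) * rms 1 D.
Proof.
  intros HD.
  assert (Hne := dissection_nonempty D HD).
  assert (Hn : 0 < INR (length D)) by (apply lt_0_INR; destruct D; [easy | simpl; lia]).
  destruct (shrink_factor_spec (length D)) as [Hc Hstrip]; [destruct D; [easy | simpl; lia] |].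
  set (c := shrink_factor (length D)) in *.
  unfold rms. rewrite length_strip_extend, areas_strip_extend, Hstrip by lra.
  rewrite map_app, sumR_app, map_map.
  (* Each deviation from the new mean [1 / (n + 2) = c / n] is [c] times the old deviation. *)
  assert (Hdev : forall a, (c * a - 1 / INR (length D + 2)) ^ 2 = c ^ 2 * (a - 1 / INR (length D)) ^ 2).
  { intros a. unfold c, shrink_factor. rewrite plus_INR. simpl. field. lra. }
  rewrite (map_ext _ _ Hdev), sumR_map_scale. simpl.
  replace (c * (1 / INR (length D)) - 1 / INR (length D + 2)) with 0
    by (unfold c, shrink_factor; rewrite plus_INR; simpl; field; lra).
  rewrite Rpower_3_2, <- sqrt_mult_alt by (try apply pow_le; lra).
  f_equal. unfold c, shrink_factor. rewrite plus_INR. simpl. field. lra.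
Qed.

Theorem lemma7p1 (D : list tri) :
  is_dissection in_unit_square D ->
  exists D' : list tri,
    is_dissection in_unit_square D' /\
    length D' = (length D + 2)%nat /\
    range D' = INR (length D) / INR (length D + 2) * range D /\
    rms 1 D' = Rpower (INR (length D) / INR (length D + 2)) (3 / 2) * rms 1 D.
Proof.
  intros HD.
  assert (Hpos : (0 < length D)%nat) by (destruct D; [now destruct (dissection_nonempty _ HD) | simpl; lia]).
  destruct (shrink_factor_spec _ Hpos) as [Hc _].
  exists (strip_extend (shrink_factor (length D)) D).
  split; [now apply strip_extend_dissection |].
  split; [apply length_strip_extend |].
  split; [apply range_strip_extend | apply rms_strip_extend]; exact HD.
Qed.
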